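(* Let $(A:B)$ be a bipartition of a set of $n$ qubits, let $\rho=|\psi\rangle\langle\psi|$ be a pure $n$-qubit state, let $\rho_A$ be its reduced state on $A$, and let $r$ be the Schmidt rank of $|\psi\rangle$ with respect to $(A:B)$. Then for any $n$-qubit Pauli string $P=P_A\otimes P_B$ (with $P_A$ labelled by $x_A$), $$p_\psi(x_A)=\frac{\mathrm{tr}(\rho_AP_A\rho_AP_A)}{2^{|A|}}\ge\frac{\mathrm{tr}(\rho P)^2}{2^{|A|}r}.$$
   Context: Pauli strings are labelled by $x\in\{0,1\}^{2n}$ via $P_x=i^{v\cdot w}(X^{v_1}Z^{w_1})\otimes\cdots\otimes(X^{v_n}Z^{w_n})$ for $x=(v_1,w_1,\dots,v_n,w_n)$, writing $x=(x_A,x_B)$ for the pairs $(v_i,w_i)$ belonging to qubits in $A$ and in $B$, so that $P_x=P_{x_A}\otimes P_{x_B}$. The Pauli distribution of a pure state is $p_\psi(x)=\mathrm{tr}(\psi P_x)^2/2^n$, and its marginal is $p_\psi(x_A)=\sum_{x_B}p_\psi(x_A,x_B)$. *)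

(* Amplitudes live in an arbitrary numClosedFieldType C
   (e.g. the complex numbers); 'i is its imaginary unit and z^* conjugation. *)
From HB Require Import structures.
From mathcomp Require Import all_boot all_order all_algebra.
Set Implicit Arguments. Unset Strict Implicit. Unset Printing Implicit Defensive.
Import Order.TTheory GRing.Theory Num.Theory.
Local Open Scope ring_scope.

Section Qubits.
Variable C : numClosedFieldType.

(* computational-basis labels of a register whose qubits are indexed by I *)
Definition bits (I : finType) := {ffun I -> bool}.

(* operators on the register I, given by their matrix entries <s|M|t> *)
Definition op (I : finType) := bits I -> bits I -> C.

Definition opmul (I : finType) (M N : op I) : op I :=
  fun s t => \sum_(u : bits I) M s u * N u t.

Definition optr (I : finType) (M : op I) : C := \sum_(s : bits I) M s s.

Definition plabel (I : finType) := {ffun I -> bool * bool}.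

(* single-qubit entry  <s| i^{v w} X^v Z^w |t> = i^{vw} [s = t xor v] (-1)^{w t} *)
Definition pauli1 (vw : bool * bool) (s t : bool) : C :=
  (if vw.1 && vw.2 then 'i else 1) *
  (if s == xorb t vw.1 then 1 else 0) *
  (if vw.2 && t then -1 else 1).

(* P_x = i^{v.w} (X^{v_1}Z^{w_1}) (x) ... (x) (X^{v_n}Z^{w_n}) *)
Definition pauli (I : finType) (x : plabel I) : op I :=
  fun s t => \prod_(i : I) pauli1 (x i) (s i) (t i).

Definition pure (I : finType) (psi : bits I -> C) : op I :=
  fun s t => psi s * (psi t)^*.

Definition normalized (I : finType) (psi : bits I -> C) : Prop :=
  \sum_(s : bits I) psi s * (psi s)^* = 1.

Definition pauli_distr (I : finType) (psi : bits I -> C) (x : plabel I) : C :=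
  (optr (opmul (pure psi) (pauli x))) ^+ 2 / 2%:R ^+ #|I|.

Definition sub (I : finType) (A : {set I}) := {i : I | i \in A}.

Definition prestr (I : finType) (A : {set I}) (x : plabel I) : plabel (sub A) :=
  [ffun i : sub A => x (val i)].

Definition pauli_marg (I : finType) (psi : bits I -> C) (A : {set I})
    (xA : plabel (sub A)) : C :=
  \sum_(y : plabel I | prestr A y == xA) pauli_distr psi y.

Definition merge (I : finType) (A : {set I}) (a : bits (sub A))
    (b : bits (sub (~: A))) : bits I :=
  [ffun j => match (insub j : option (sub A)) with
             | Some i => a i
             | None => match (insub j : option (sub (~: A))) with
                       | Some k => b k
                       | None => false
                       end
             end].

Definition ptraceB (I : finType) (A : {set I}) (M : op I) : op (sub A) :=
  fun a a' => \sum_(b : bits (sub (~: A))) M (merge a b) (merge a' b).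

Definition reduced (I : finType) (psi : bits I -> C) (A : {set I}) : op (sub A) :=
  @ptraceB I A (pure psi).

Definition coef_mx (I : finType) (psi : bits I -> C) (A : {set I}) :
    'M[C]_(#|{: bits (sub A)}|, #|{: bits (sub (~: A))}|) :=
  \matrix_(i, j) psi (merge (enum_val i) (enum_val j)).

(* Schmidt rank = number of nonzero Schmidt coefficients
                = rank of the coefficient matrix *)
Definition schmidt_rank (I : finType) (psi : bits I -> C) (A : {set I}) : nat :=
  \rank (coef_mx psi A).

End Qubits.
Arguments pauli {C I} x _ _.
Arguments pure {C I} psi _ _.
Arguments prestr {I} A x.
Arguments pauli_marg {C I} psi A xA.
Arguments merge {I A} a b.
Arguments ptraceB {C I} A M _ _.
Arguments reduced {C I} psi A _ _.
Arguments coef_mx {C I} psi A.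
Arguments schmidt_rank {C I} psi A.

From HB Require Import structures.
From mathcomp Require Import all_boot all_order all_algebra.
From mathcomp Require Import ring spectral.
Set Implicit Arguments. Unset Strict Implicit. Unset Printing Implicit Defensive.
Import Order.TTheory GRing.Theory Num.Theory.
Local Open Scope ring_scope.
Local Open Scope sesquilinear_scope.

(* Arrange the amplitudes of psi into the coefficient matrix M (rows indexed by
   A, columns by B = ~: A), so that rho_A = M M^† and
   tr(psi (P_A (x) P_B)) = tr(N P_B^T) with N = M^† P_A M.  Completeness of the
   Pauli basis, sum_z (P_z)_{s1 s2} (P_z)_{s3 s4} = 2^|B| [s1 = s4] [s2 = s3],
   turns the marginal sum over x_B into 2^|B| tr(N^2) / 2^n, which is
   tr(rho_A P_A rho_A P_A) / 2^|A|.  For the bound, the rows of the hermitian N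
   lie in the row space of M, of dimension r.  With V an orthonormal basis of
   it, N = V^† G V for G = V N V^†, and Cauchy-Schwarz for the Frobenius product
   gives tr(N P_B^T)^2 <= tr(G^2) |V P_B^T V^†|^2 <= tr(N^2) r, by Bessel's
   inequality and the unitarity of P_B. *)

Section Bipartition.
Variables (I : finType) (A : {set I}).

(* The default [d] is never used, as [A] and [~: A] cover [I];
   [merge] is [mergef _ _ false]. *)
Definition mergef (T : Type) (a : {ffun sub A -> T}) (b : {ffun sub (~: A) -> T})
    (d : T) : {ffun I -> T} :=
  [ffun j => match (insub j : option (sub A)) with
             | Some i => a i
             | None => match (insub j : option (sub (~: A))) with
                       | Some k => b k
                       | None => d
                       end
             end].

Definition restrf (T : Type) (B : {set I}) (f : {ffun I -> T}) : {ffun sub B -> T} :=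
  [ffun i : sub B => f (val i)].

Lemma mergef_val T a b d (i : sub A) : @mergef T a b d (val i) = a i.
Proof. by rewrite ffunE valK. Qed.

Lemma mergef_valC T a b d (i : sub (~: A)) : @mergef T a b d (val i) = b i.
Proof. by rewrite ffunE insubN ?valK // -in_setC (valP i). Qed.

Lemma restrf_mergef T a b d : restrf A (@mergef T a b d) = a.
Proof. by apply/ffunP => i; rewrite ffunE mergef_val. Qed.

Lemma restrfC_mergef T a b d : restrf (~: A) (@mergef T a b d) = b.
Proof. by apply/ffunP => i; rewrite ffunE mergef_valC. Qed.

Lemma mergef_restrf T d (f : {ffun I -> T}) :
  mergef (restrf A f) (restrf (~: A) f) d = f.
Proof.
apply/ffunP => j; rewrite ffunE.
case: insubP => [i _ <-|jNA]; first by rewrite ffunE.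
by case: insubP => [k _ <-|]; rewrite ?ffunE // inE jNA.
Qed.

Lemma big_mergef (R : nmodType) (T : finType) d (F : {ffun I -> T} -> R) :
  \sum_f F f = \sum_(a : {ffun sub A -> T}) \sum_(b : {ffun sub (~: A) -> T})
                 F (mergef a b d).
Proof.
rewrite pair_bigA (reindex (fun p => mergef p.1 p.2 d)) //=.
exists (fun f => (restrf A f, restrf (~: A) f)) => [[a b] _|f _].
  by rewrite restrf_mergef restrfC_mergef.
by rewrite mergef_restrf.
Qed.

Lemma big_restrf_eq (R : nmodType) (T : finType) d (F : {ffun I -> T} -> R) a :
  \sum_(f | restrf A f == a) F f = \sum_(b : {ffun sub (~: A) -> T}) F (mergef a b d).
Proof.
rewrite big_mkcond (big_mergef d) (bigD1 a) //= [X in _ + X]big1 ?addr0.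
  by apply: eq_bigr => b _; rewrite restrf_mergef eqxx.
by move=> a' /negbTE a'Na; apply: big1 => b _; rewrite restrf_mergef a'Na.
Qed.

Lemma prodr_sub_setC (R : comPzSemiRingType) (F : I -> R) :
  \prod_i F i = \prod_(i : sub A) F (val i) * \prod_(i : sub (~: A)) F (val i).
Proof.
rewrite (bigID (mem A)) /=; congr (_ * _); first by rewrite big_sub.
by rewrite -big_sub; apply: eq_bigl => i; rewrite !inE.
Qed.

Lemma card_sub_setC : #|I| = (#|A| + #|{: sub (~: A)}|)%N.
Proof. by rewrite card_sig cardsC. Qed.

End Bipartition.

Section Pauli.
Variable C : numClosedFieldType.

Lemma pauli1_conj vw s t : (pauli1 C vw s t)^* = pauli1 C vw t s.
Proof.
case: vw => [[] []]; case: s; case: t; rewrite /pauli1 /=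
  ?(mulr1, mul1r, mulr0, mul0r, mulrN, mulNr, opprK, oppr0)
  ?(conjC0, conjC1, conjCN1, conjCi) //.
by rewrite -conjCi conjCK.
Qed.

Lemma pauli1_sqr vw s u :
  \sum_t pauli1 C vw s t * pauli1 C vw t u = if s == u then 1 else 0.
Proof.
rewrite big_bool; case: vw => [[] []]; case: s; case: u; rewrite /pauli1 /=
  ?(mulr1, mul1r, mulr0, mul0r, mulrN, mulNr, mulrNN, opprK, oppr0, addr0, add0r)
  -?expr2 ?sqrCi ?opprK //.
Qed.

Lemma pauli1_complete s1 s2 s3 s4 :
  \sum_(vw : bool * bool) pauli1 C vw s1 s2 * pauli1 C vw s3 s4 =
  if (s1 == s4) && (s2 == s3) then 2%:R else 0.
Proof.
rewrite -(pair_bigA _ (fun v w => pauli1 C (v, w) s1 s2 * pauli1 C (v, w) s3 s4)).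
rewrite !big_bool; case: s1; case: s2; case: s3; case: s4; rewrite /pauli1 /=
  ?(mulr1, mul1r, mulr0, mul0r, mulrN, mulNr, mulrNN, opprK, oppr0, addr0, add0r)
  -?expr2 ?sqrCi ?opprK ?addNr //.
Qed.

Lemma prodr_if_const (J : finType) (P : pred J) (c : C) :
  \prod_i (if P i then c else 0) = if [forall i, P i] then c ^+ #|J| else 0.
Proof.
case: ifP => [/forallP allP | /negbT/forallPn[i /negbTE Pi]].
  by rewrite -prodr_const; apply: eq_bigr => i _; rewrite allP.
by rewrite (bigD1 i) //= Pi mul0r.
Qed.

Variable J : finType.

Lemma pauli_conj (x : plabel J) s t : (pauli (C:=C) x s t)^* = pauli x t s.
Proof. by rewrite rmorph_prod; apply: eq_bigr => i _; exact: pauli1_conj. Qed.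

Lemma pauli_sqr (x : plabel J) s u :
  \sum_t pauli x s t * pauli x t u = if s == u then 1 else 0 :> C.
Proof.
under eq_bigr do rewrite -big_split /=.
rewrite -(bigA_distr_bigA (fun i b => pauli1 C (x i) (s i) b * pauli1 C (x i) b (u i))).
under eq_bigr do rewrite pauli1_sqr.
rewrite prodr_if_const expr1n; congr (if _ then _ else _).
by apply/eqfunP/eqP => [/ffunP|->].
Qed.

Lemma pauli_complete s1 s2 s3 s4 :
  \sum_(z : plabel J) pauli z s1 s2 * pauli z s3 s4 =
  if (s1 == s4) && (s2 == s3) then 2%:R ^+ #|J| else 0 :> C.
Proof.
under eq_bigr do rewrite -big_split /=.
rewrite -(bigA_distr_bigA
  (fun i vw => pauli1 C vw (s1 i) (s2 i) * pauli1 C vw (s3 i) (s4 i))).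
under eq_bigr do rewrite pauli1_complete.
rewrite prodr_if_const; congr (if _ then _ else _).
apply/forallP/andP => [eq_s | [/eqP -> /eqP ->] i]; last by rewrite !eqxx.
by split; apply/eqP/ffunP => i; have /andP[/eqP ? /eqP ?] := eq_s i.
Qed.

End Pauli.

Section TraceInequalities.
Variable C : numClosedFieldType.

Lemma mxtrace_dotmx m n (X Y : 'M[C]_(m, n)) :
  \tr (X *m Y^t*) = dotmx (mxvec X) (mxvec Y).
Proof.
rewrite dotmxE mxE /mxtrace.
under eq_bigr do rewrite mxE.
rewrite pair_bigA /= (reindex (uncurry (@mxvec_index m n))) /=;
  last exact: curry_mxvec_bij.
by apply: eq_bigr => -[i j] _; rewrite /= !mxE !mxvecE.
Qed.

Lemma mxtrace_CauchySchwarz m n (X Y : 'M[C]_(m, n)) :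
  `|\tr (X *m Y^t*)| ^+ 2 <= \tr (X *m X^t*) * \tr (Y *m Y^t*).
Proof.
rewrite !mxtrace_dotmx.
exact: (CauchySchwarz (@dotmx C _) (mxvec X) (mxvec Y)).1.
Qed.

Lemma mxtrace_adj_ge0 m n (X : 'M[C]_(m, n)) : 0 <= \tr (X *m X^t*).
Proof. by rewrite mxtrace_dotmx dnorm_ge0. Qed.

Lemma trmxC_mul m n p (X : 'M[C]_(m, n)) (Y : 'M[C]_(n, p)) :
  (X *m Y)^t* = Y^t* *m X^t*.
Proof. by rewrite trmx_mul map_mxM. Qed.

Lemma bessel_mxtrace r n m (V : 'M[C]_(r, n)) (X : 'M[C]_(n, m)) :
  V \is unitarymx -> \tr ((V *m X) *m (V *m X)^t*) <= \tr (X *m X^t*).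
Proof.
move=> /unitarymxP VV; set Pi := V^t* *m V.
have PiH : Pi^t* = Pi by rewrite trmxC_mul trmxCK.
have PiP : Pi *m Pi = Pi by rewrite mulmxA -(mulmxA _ V) VV mulmx1.
have -> : \tr ((V *m X) *m (V *m X)^t*) = \tr (X^t* *m Pi *m X).
  by rewrite mxtrace_mulC trmxC_mul !mulmxA.
clearbody Pi.
have adjB : (X - Pi *m X)^t* = X^t* - X^t* *m Pi.
  by rewrite [(X - _)^T]linearB map_mxB trmxC_mul PiH.
have : 0 <= \tr ((X - Pi *m X)^t* *m (X - Pi *m X)).
  by rewrite mxtrace_mulC mxtrace_adj_ge0.
rewrite adjB mulmxBl !mulmxBr !mulmxA -(mulmxA _ Pi Pi) PiP subrr subr0.
by rewrite raddfB subr_ge0 [\tr (X *m _)]mxtrace_mulC.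
Qed.

Lemma mxtrace_mul_unitary_sqr_le r n (V : 'M[C]_(r, n)) (N Q : 'M[C]_n) :
  V \is unitarymx -> (N <= V)%MS -> N^t* = N -> Q \is unitarymx ->
  `|\tr (N *m Q)| ^+ 2 <= r%:R * \tr (N *m N).
Proof.
move=> VU /submxP[W defN] NH QU.
have NVV : N *m V^t* *m V = N by rewrite defN mulmxtVK.
have VVN : V^t* *m V *m N = N.
  by have := congr1 (fun X => X^t*) NVV; rewrite /= !trmxC_mul trmxCK NH mulmxA.
set G := V *m N *m V^t*.
have GH : G^t* = G by rewrite !trmxC_mul trmxCK NH mulmxA.
have NG : N = V^t* *m G *m V by rewrite /G !mulmxA VVN NVV.
have trNN : \tr (N *m N) = \tr (G *m G^t*).
  by rewrite GH /G !mulmxA [RHS]mxtrace_mulC !mulmxA VVN NVV.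
set H := V *m (Q^t* *m V^t*).
have trNQ : \tr (N *m Q) = \tr (G *m H^t*).
  rewrite {1}NG /H !trmxC_mul !trmxCK -!mulmxA mxtrace_mulC.
  by rewrite !mulmxA.
have trHH : \tr (H *m H^t*) <= r%:R.
  apply: le_trans (bessel_mxtrace _ VU) _.
  rewrite trmxC_mul !trmxCK mxtrace_mulC !mulmxA -(mulmxA _ Q) (unitarymxP QU).
  by rewrite mulmx1 (unitarymxP VU) mxtrace1.
rewrite trNQ trNN [_ * \tr _]mulrC.
apply: le_trans (mxtrace_CauchySchwarz G H) _.
exact: ler_wpM2l (mxtrace_adj_ge0 G) _ _ trHH.
Qed.

End TraceInequalities.

Lemma sum_enum_val (T : finType) (R : nmodType) (F : T -> R) :
  \sum_t F t = \sum_(i < #|{: T}|) F (enum_val i).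
Proof. exact: (big_enum_val (A := {: T})). Qed.

Section OperatorMatrix.
Variables (C : numClosedFieldType) (T : finType).

Definition mxop (M : op C T) : 'M[C]_#|{: bits T}| :=
  \matrix_(i, j) M (enum_val i) (enum_val j).

Lemma mxop_mul (M N : op C T) : mxop (opmul M N) = mxop M *m mxop N.
Proof.
apply/matrixP => i j; rewrite !mxE /opmul sum_enum_val.
by apply: eq_bigr => k _; rewrite !mxE.
Qed.

Lemma optr_mxtrace (M : op C T) : optr M = \tr (mxop M).
Proof. by rewrite /optr sum_enum_val; apply: eq_bigr => i _; rewrite mxE. Qed.

Lemma mxop_pauli_adj (x : plabel T) : (mxop (pauli x))^t* = mxop (pauli x).
Proof. by apply/matrixP => i j; rewrite !mxE pauli_conj. Qed.

Lemma mxop_pauli_unitary (x : plabel T) : mxop (pauli x) \is unitarymx.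
Proof.
apply/unitarymxP/matrixP => i j; rewrite mxop_pauli_adj -mxop_mul !mxE /opmul.
by rewrite pauli_sqr (inj_eq enum_val_inj); case: eqP.
Qed.

Lemma sum_sqr_mxtrace_pauli (N : 'M[C]_#|{: bits T}|) :
  \sum_(z : plabel T) \tr (N *m (mxop (pauli z))^T) ^+ 2 =
  2%:R ^+ #|T| * \tr (N *m N).
Proof.
pose P z (p : 'I_#|{: bits T}| * 'I_#|{: bits T}|) :=
  pauli (C:=C) z (enum_val p.1) (enum_val p.2).
have trE z : \tr (N *m (mxop (pauli z))^T) = \sum_p N p.1 p.2 * P z p.
  rewrite /mxtrace; under eq_bigr do rewrite mxE.
  by rewrite pair_bigA; apply: eq_bigr => -[j k] _; rewrite !mxE.
have PP p q : \sum_z P z p * P z q =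
    if q == (p.2, p.1) then 2%:R ^+ #|T| else 0.
  rewrite pauli_complete !(inj_eq enum_val_inj).
  case: p q => [j k] [j' k'].
  by rewrite xpair_eqE /= andbC [k == _]eq_sym [j == _]eq_sym.
under eq_bigr do rewrite trE expr2 big_distrlr /=.
rewrite exchange_big; under eq_bigr do rewrite exchange_big /=.
rewrite /mxtrace mulr_sumr; under [RHS]eq_bigr do rewrite mxE mulr_sumr.
rewrite [RHS]pair_bigA; apply: eq_bigr => p _.
under eq_bigr do under eq_bigr do rewrite mulrACA.
under eq_bigr do rewrite -mulr_sumr PP.
rewrite (bigD1 (p.2, p.1)) //= [X in _ + X]big1 => [|q /negbTE ->]; last by rewrite mulr0.
by rewrite eqxx addr0 mulrC.
Qed.

End OperatorMatrix.

Section Bipartite.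
Variables (C : numClosedFieldType) (I : finType) (A : {set I}) (psi : bits I -> C).

Local Notation M := (coef_mx psi A).

Lemma pauli_mergef (y : plabel I) a b a' b' :
  pauli y (mergef a b false) (mergef a' b' false) =
  pauli (prestr A y) a a' * pauli (prestr (~: A) y) b b' :> C.
Proof.
rewrite /pauli (prodr_sub_setC A); congr (_ * _); apply: eq_bigr => i _;
  by rewrite ?mergef_val ?mergef_valC ffunE.
Qed.

Lemma optr_pure_pauli (y : plabel I) :
  optr (opmul (pure psi) (pauli y)) =
  \tr (M^t* *m mxop (pauli (prestr A y)) *m M *m (mxop (pauli (prestr (~: A) y)))^T).
Proof.
(* The sums over (a, b, a', b') are reordered as (b', b, a', a), the order in
   which the trace of the matrix product expands. *)
rewrite /optr /opmul /pure (big_mergef A false).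
under eq_bigr do under eq_bigr do rewrite (big_mergef A false).
under eq_bigr do under eq_bigr do under eq_bigr do under eq_bigr do rewrite pauli_mergef.
rewrite sum_enum_val.
under eq_bigr do rewrite sum_enum_val.
under eq_bigr do under eq_bigr do rewrite sum_enum_val.
under eq_bigr do under eq_bigr do under eq_bigr do rewrite sum_enum_val.
under eq_bigr do under eq_bigr do rewrite exchange_big.
rewrite exchange_big.
under eq_bigr do rewrite exchange_big.
rewrite exchange_big.
rewrite /mxtrace; apply: eq_bigr => j' _; rewrite mxE.
apply: eq_bigr => j _; rewrite mxE big_distrl; apply: eq_bigr => i _.
rewrite mxE big_distrl big_distrl; apply: eq_bigr => i' _.
rewrite !mxE /=; ring.
Qed.

Lemma mxop_reduced : mxop (reduced psi A) = M *m M^t*.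
Proof.
apply/matrixP => i j; rewrite !mxE /reduced /ptraceB /pure sum_enum_val.
by apply: eq_bigr => k _; rewrite !mxE.
Qed.

Lemma optr_reduced_pauli (P : op C (sub A)) :
  optr (opmul (opmul (reduced psi A) P) (opmul (reduced psi A) P)) =
  \tr ((M^t* *m mxop P *m M) *m (M^t* *m mxop P *m M)).
Proof.
rewrite optr_mxtrace !mxop_mul mxop_reduced.
by rewrite !mulmxA mxtrace_mulC !mulmxA mxtrace_mulC !mulmxA.
Qed.

Lemma optr_pure_pauli_real (y : plabel I) :
  (optr (opmul (pure psi) (pauli y)))^* = optr (opmul (pure psi) (pauli y)).
Proof.
rewrite /optr /opmul /pure rmorph_sum exchange_big; apply: eq_bigr => u _.
rewrite rmorph_sum; apply: eq_bigr => s _.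
by rewrite !rmorphM /= conjCK pauli_conj [psi s * _]mulrC.
Qed.

Lemma pauli_marg_reduced (x : plabel I) :
  let PA := pauli (prestr A x) in
  pauli_marg psi A (prestr A x) =
  optr (opmul (opmul (reduced psi A) PA) (opmul (reduced psi A) PA)) / 2%:R ^+ #|A|.
Proof.
have prestrK a b : prestr A (mergef a b (false, false)) = a := restrf_mergef a b _.
have prestrCK a b : prestr (~: A) (mergef a b (false, false)) = b := restrfC_mergef a b _.
rewrite /pauli_marg /pauli_distr -mulr_suml.
rewrite (big_restrf_eq (false, false)
  (fun y => optr (opmul (pure psi) (pauli y)) ^+ 2)).
under eq_bigr do rewrite optr_pure_pauli prestrK prestrCK.
rewrite sum_sqr_mxtrace_pauli optr_reduced_pauli (card_sub_setC A) exprD.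
have two_neq0 k : (2%:R ^+ k : C) != 0 by rewrite expf_neq0 // pnatr_eq0.
by field; rewrite !two_neq0.
Qed.

Lemma sqr_optr_pure_pauli_le (x : plabel I) :
  let PA := pauli (prestr A x) in
  optr (opmul (pure psi) (pauli x)) ^+ 2 / (schmidt_rank psi A)%:R <=
  optr (opmul (opmul (reduced psi A) PA) (opmul (reduced psi A) PA)).
Proof.
rewrite /= optr_reduced_pauli.
set N := M^t* *m _ *m M.
have NH : N^t* = N by rewrite !trmxC_mul trmxCK mxop_pauli_adj mulmxA.
have [->|r_neq0] := eqVneq (schmidt_rank psi A) 0%N.
  by rewrite invr0 mulr0 -{2}NH mxtrace_adj_ge0.
rewrite ler_pdivrMr ?ltr0n ?lt0n // mulrC.
rewrite expr2 -{2}optr_pure_pauli_real -normCK optr_pure_pauli -/N.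
apply: (mxtrace_mul_unitary_sqr_le (V := schmidt (row_base M))) => //.
- exact/schmidt_unitarymx/rank_leq_col.
- apply: submx_trans (submxMl _ _) _.
  by apply: submx_trans (schmidt_sub _); rewrite eq_row_base.
- by rewrite trmx_unitary mxop_pauli_unitary.
Qed.

End Bipartite.

Theorem lemma1 (C : numClosedFieldType) (n : nat) (A : {set 'I_n})
    (psi : bits 'I_n -> C) (x : plabel 'I_n) :
  normalized psi ->
  let rhoA := reduced psi A in
  let PA := pauli (C:=C) (prestr A x) in
  let q := optr (opmul (opmul rhoA PA) (opmul rhoA PA)) / 2%:R ^+ #|A| in
  pauli_marg psi A (prestr A x) = q /\
  (optr (opmul (pure psi) (pauli (C:=C) x))) ^+ 2
    / (2%:R ^+ #|A| * (schmidt_rank psi A)%:R) <= q.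
Proof.
(* Both sides are quartic in psi. *)
move=> _ rhoA PA q; split; first exact: pauli_marg_reduced.
rewrite /q invfM mulrCA [_ / 2%:R ^+ _]mulrC.
rewrite ler_pM2l ?invr_gt0 ?exprn_gt0 ?ltr0n //.
exact: sqr_optr_pure_pauli_le.
Qed.
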